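(* Let $T$ be a countable tree without leaves (vertices of infinite degree allowed), $P=(p(x,y))$ a stochastic nearest-neighbour transition matrix on $T$, and $\lambda\in\mathbb C$. Suppose the oriented edges carry $\lambda$-weights $f(x,y)\in\mathbb C$ satisfying for every vertex $x$ and neighbour $y$: (i) $f(x,y)f(y,x)\neq1$; (ii) $u(x,x)=\sum_{v\sim x}p(x,v)f(v,x)$ converges absolutely and $u(x,x)\neq\lambda$; (iii) $\lambda f(x,y)=p(x,y)+\bigl(u(x,x)-p(x,y)f(y,x)\bigr)f(x,y)$. Extend $f$ to all pairs by $f(x,x)=1$ and multiplicatively along geodesics: $f(x,y)=\prod_{i=1}^k f(x_{i-1},x_i)$ if the geodesic from $x$ to $y$ is $[x_0,\dots,x_k]$. Define $g(x,y)=f(x,y)/(\lambda-u(y,y))$ for $x,y\in T$. Then for every $x\in T$ and every neighbour $y$ of $x$: $$g(x,x)p(x,y)=\frac{f(x,y)}{1-f(x,y)f(y,x)},\qquad g(x,x)g(y,y)=g(x,y)\Bigl(\frac1{p(x,y)}+g(y,x)\Bigr),$$ $$\lambda\,g(x,x)=1+\sum_{y:\,y\sim x}\frac{f(x,y)f(y,x)}{1-f(x,y)f(y,x)},$$ and when $x$ has infinite degree the last sum converges absolutely.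
   Context: A nearest-neighbour stochastic transition matrix means $p(x,y)>0$ iff $x\sim y$ and $\sum_y p(x,y)=1$ for all $x$. A leaf is a vertex of degree $1$. *)

From Stdlib Require Import Reals.
From Coquelicot Require Import Coquelicot.
From mathcomp Require Import ssreflect ssrfun ssrbool eqtype ssrnat seq path choice.

Set Implicit Arguments.
Unset Strict Implicit.

Section Defs.
Variable V : countType.
Variable adj : rel V.

Definition simple_graph : Prop :=
  (forall x y, adj x y = adj y x) /\ (forall x, ~~ adj x x).

Definition connected_graph : Prop :=
  forall x y, exists s : seq V, path adj x s /\ last x s = y.

(* a cycle: distinct vertices v0 :: s (at least 3), consecutive adjacent,
   last adjacent to v0 *)
Definition is_cycle (v0 : V) (s : seq V) : Prop :=
  [/\ (2 <= size s)%N, path adj v0 s, uniq (v0 :: s) & adj (last v0 s) v0].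

Definition acyclic : Prop := forall v0 s, ~ is_cycle v0 s.

Definition is_tree : Prop := [/\ simple_graph, connected_graph & acyclic].

Definition is_leaf (x : V) : Prop :=
  exists y, adj x y /\ forall z, adj x z -> z = y.

Definition infinite_degree (x : V) : Prop :=
  forall s : seq V, exists y, adj x y /\ y \notin s.

Definition geodesic (x : V) (s : seq V) : Prop :=
  path adj x s /\
  forall s', path adj x s' -> last x s' = last x s -> (size s <= size s')%N.

Fixpoint walk_prod (f : V -> V -> C) (x : V) (s : seq V) : C :=
  match s with
  | [::] => RtoC 1
  | y :: s' => Cmult (f x y) (walk_prod f y s')
  end.

(* enumeration of all vertices via the countType structure: the n-th term
   is a v at the vertex v with pickle v = n (each vertex occurs exactly once) *)
Definition vterm {A} (zero : A) (a : V -> A) (n : nat) : A :=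
  match @pickle_inv V n with Some v => a v | None => zero end.

Definition nbterm (x : V) (a : V -> C) (n : nat) : C :=
  vterm (RtoC 0) (fun v => if adj x v then a v else RtoC 0) n.

Definition nb_abs_conv (x : V) (a : V -> C) : Prop :=
  ex_series (fun n => Cmod (nbterm x a n)).

Definition nb_sum_is (x : V) (a : V -> C) (l : C) : Prop :=
  is_series (nbterm x a) l.

Definition nn_stochastic (p : V -> V -> R) : Prop :=
  (forall x y, (0 <= p x y)%R) /\
  (forall x y, (0 < p x y)%R <-> adj x y) /\
  (forall x, is_series (vterm 0%R (p x)) 1%R).

End Defs.

From Stdlib Require Import Reals Lra.
From Coquelicot Require Import Coquelicot.
From mathcomp Require Import ssreflect ssrfun ssrbool eqtype ssrnat seq path choice.

Set Implicit Arguments.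
Unset Strict Implicit.

(* Only the local recursion (iii) matters: it says
   (lam - u(x)) f(x,y) = p(x,y) (1 - f(x,y) f(y,x)) on every edge, and the two
   edge identities are rearrangements of it.  The same identity rewrites each
   term f(x,y) f(y,x) / (1 - f(x,y) f(y,x)) as p(x,y) f(y,x) / (lam - u(x)), so
   the neighbour sum is the series defining u(x) scaled by 1 / (lam - u(x)),
   which also transfers its absolute convergence. *)

Lemma Cminus_neq0 (a b : C) : a <> b -> Cminus a b <> RtoC 0.
Proof.
move=> a_neq_b ab0; apply: a_neq_b.
by transitivity (Cplus (Cminus a b) b); [rewrite /Cminus; ring | rewrite ab0; ring].
Qed.

Lemma RtoC_neq0 (r : R) : r <> 0%R -> RtoC r <> RtoC 0.
Proof. by move=> r_neq0 [r0]. Qed.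

Section NeighbourSumScale.

Variables (V : countType) (adj : rel V) (x : V) (a b : V -> C) (c : C).
Hypothesis a_scale_b : forall y, adj x y -> a y = Cmult c (b y).

Lemma nbterm_scale n : nbterm adj x a n = Cmult c (nbterm adj x b n).
Proof.
rewrite /nbterm /vterm; case: (pickle_inv n) => [v|]; last by rewrite Cmult_0_r.
by case xv: (adj x v); [exact: a_scale_b | rewrite Cmult_0_r].
Qed.

Lemma nb_sum_is_scale l : nb_sum_is adj x b l -> nb_sum_is adj x a (Cmult c l).
Proof.
move=> b_sum; apply: (is_series_ext _ _ _ (fun n => esym (nbterm_scale n))).
exact: (@is_series_scal C_AbsRing C_NormedModule).
Qed.

Lemma nb_abs_conv_scale : nb_abs_conv adj x b -> nb_abs_conv adj x a.
Proof.
move=> b_abs.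
apply: (ex_series_ext (fun n => Rmult (Cmod c) (Cmod (nbterm adj x b n)))).
  by move=> n; rewrite nbterm_scale Cmod_mult.
exact: (@ex_series_scal R_AbsRing R_NormedModule).
Qed.

End NeighbourSumScale.

Section EdgeIdentities.

Variables (lam ux uy fxy fyx : C) (pxy : R).
Hypothesis ux_neq_lam : ux <> lam.
Hypothesis recursion :
  Cmult lam fxy = Cplus (RtoC pxy) (Cmult (Cminus ux (Cmult (RtoC pxy) fyx)) fxy).

Lemma edge_balance :
  Cmult (Cminus lam ux) fxy = Cmult (RtoC pxy) (Cminus (RtoC 1) (Cmult fxy fyx)).
Proof.
transitivity (Cminus (Cmult lam fxy) (Cmult ux fxy)); first by rewrite /Cminus; ring.
by rewrite recursion /Cminus; ring.
Qed.

Hypothesis ffxy_neq1 : Cmult fxy fyx <> RtoC 1.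

Let lam_ux_neq0 : Cminus lam ux <> RtoC 0 := Cminus_neq0 (nesym ux_neq_lam).
Let one_ff_neq0 : Cminus (RtoC 1) (Cmult fxy fyx) <> RtoC 0 :=
  Cminus_neq0 (nesym ffxy_neq1).

Lemma edge_transition :
  RtoC pxy = Cdiv (Cmult (Cminus lam ux) fxy) (Cminus (RtoC 1) (Cmult fxy fyx)).
Proof. by rewrite edge_balance; field. Qed.

Lemma edge_ratio :
  Cdiv (Cmult fxy fyx) (Cminus (RtoC 1) (Cmult fxy fyx)) =
  Cmult (Cinv (Cminus lam ux)) (Cmult (RtoC pxy) fyx).
Proof. by rewrite edge_transition; field. Qed.

Lemma green_diag_transition :
  Cmult (Cdiv (RtoC 1) (Cminus lam ux)) (RtoC pxy) =
  Cdiv fxy (Cminus (RtoC 1) (Cmult fxy fyx)).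
Proof. by rewrite edge_transition; field. Qed.

Hypotheses (uy_neq_lam : uy <> lam) (pxy_neq0 : pxy <> 0%R).

Let lam_uy_neq0 : Cminus lam uy <> RtoC 0 := Cminus_neq0 (nesym uy_neq_lam).
Let pxy_neq0C : RtoC pxy <> RtoC 0 := RtoC_neq0 pxy_neq0.

Lemma green_edge_identity :
  Cmult (Cdiv (RtoC 1) (Cminus lam ux)) (Cdiv (RtoC 1) (Cminus lam uy)) =
  Cmult (Cdiv fxy (Cminus lam uy))
        (Cplus (Cinv (RtoC pxy)) (Cdiv fyx (Cminus lam ux))).
Proof.
have -> : Cdiv (RtoC 1) (Cminus lam ux) =
          Cdiv (Cplus (Cmult fxy (Cminus lam ux)) (Cmult (RtoC pxy) (Cmult fxy fyx)))
               (Cmult (RtoC pxy) (Cminus lam ux)).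
  by rewrite Cmult_comm edge_balance; field.
by field.
Qed.

End EdgeIdentities.

Theorem lemma3p2 (V : countType) (adj : rel V) (p : V -> V -> R)
  (lam : C) (f : V -> V -> C) (u : V -> C) :
  is_tree adj ->
  (forall x, ~ is_leaf adj x) ->
  nn_stochastic adj p ->
  (* (i) *)
  (forall x y, adj x y -> Cmult (f x y) (f y x) <> RtoC 1) ->
  (* (ii) u(x,x) = sum_{v ~ x} p(x,v) f(v,x), absolutely convergent, <> lam *)
  (forall x, nb_abs_conv adj x (fun v => Cmult (RtoC (p x v)) (f v x))) ->
  (forall x, nb_sum_is adj x (fun v => Cmult (RtoC (p x v)) (f v x)) (u x)) ->
  (forall x, u x <> lam) ->
  (* (iii) *)
  (forall x y, adj x y ->
     Cmult lam (f x y) =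
     Cplus (RtoC (p x y))
           (Cmult (Cminus (u x) (Cmult (RtoC (p x y)) (f y x))) (f x y))) ->
  (* extension of f: f(x,x) = 1 and multiplicative along geodesics *)
  (forall x, f x x = RtoC 1) ->
  (forall x s, geodesic adj x s -> f x (last x s) = walk_prod f x s) ->
  let g := fun x y => Cdiv (f x y) (Cminus lam (u y)) in
  forall x,
    (forall y, adj x y ->
       Cmult (g x x) (RtoC (p x y)) =
         Cdiv (f x y) (Cminus (RtoC 1) (Cmult (f x y) (f y x))) /\
       Cmult (g x x) (g y y) =
         Cmult (g x y) (Cplus (Cinv (RtoC (p x y))) (g y x))) /\
    nb_sum_is adj x
      (fun y => Cdiv (Cmult (f x y) (f y x))
                     (Cminus (RtoC 1) (Cmult (f x y) (f y x))))
      (Cminus (Cmult lam (g x x)) (RtoC 1)) /\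
    (infinite_degree adj x ->
     nb_abs_conv adj x
      (fun y => Cdiv (Cmult (f x y) (f y x))
                     (Cminus (RtoC 1) (Cmult (f x y) (f y x))))).
Proof.
move=> _ _ [_ [p_pos_adj _]] ff_neq1 u_abs u_sum u_neq_lam recursion f_refl _ g x.
have g_diag z : g z z = Cdiv (RtoC 1) (Cminus lam (u z)) by rewrite /g f_refl.
have ratio y : adj x y ->
    Cdiv (Cmult (f x y) (f y x)) (Cminus (RtoC 1) (Cmult (f x y) (f y x))) =
    Cmult (Cinv (Cminus lam (u x))) (Cmult (RtoC (p x y)) (f y x)).
  by move=> xy; apply: edge_ratio; auto.
split; [|split].
- move=> y xy; rewrite !g_diag; split; first by apply: green_diag_transition; auto.
  have p_neq0 : p x y <> 0%R by have := proj2 (p_pos_adj x y) xy; lra.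
  by apply: green_edge_identity; auto.
- have -> : Cminus (Cmult lam (g x x)) (RtoC 1) =
            Cmult (Cinv (Cminus lam (u x))) (u x).
    by rewrite g_diag; field; exact: Cminus_neq0 (nesym (u_neq_lam x)).
  by apply: (nb_sum_is_scale ratio); exact: u_sum.
- by move=> _; apply: (nb_abs_conv_scale ratio); exact: u_abs.
Qed.
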